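(* Let $A:\ell_2\to\ell_2$ be a bounded operator with matrix $(a_{m,n})_{m,n\ge0}$, $a_{m,n}=\langle Ae_n,e_m\rangle$, where $(e_n)$ is the canonical basis. Let $(d_n)_{n\ge0}$ be positive numbers such that for all $m,n$: $d_m<d_n\Rightarrow a_{m,n}=0$. Then the matrix $\big(d_m^{-1}a_{m,n}d_n\big)_{m,n}$ (i.e. $D^{-1}AD$ with $D$ the diagonal operator $De_n=d_ne_n$) defines a bounded operator on $\ell_2$ and $\|D^{-1}AD\|\le\|A\|$. *)

From HB Require Import structures.
From mathcomp Require Import all_boot all_order all_algebra.
From mathcomp Require Import all_classical all_reals all_analysis.
From mathcomp Require Import complex.
Set Implicit Arguments. Unset Strict Implicit. Unset Printing Implicit Defensive.
Import Order.TTheory GRing.Theory Num.Theory.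
Local Open Scope ring_scope.

Section L2.
Variable R : realType.

Definition csq (z : R[i]) : R := (complex.Re z) ^+ 2 + (complex.Im z) ^+ 2.

Definition l2sq (x : nat -> R[i]) : \bar R :=
  (\sum_(0 <= k <oo) (csq (x k))%:E)%E.

Definition in_l2 (x : nat -> R[i]) : Prop := (l2sq x < +oo)%E.

Definition basis_vec (n : nat) : nat -> R[i] := fun k => (k == n)%:R.

Definition l2_linear (A : (nat -> R[i]) -> (nat -> R[i])) : Prop :=
  (forall x, in_l2 x -> in_l2 (A x)) /\
  (forall x y, in_l2 x -> in_l2 y -> A (fun k => x k + y k) = (fun k => A x k + A y k)) /\
  (forall (c : R[i]) x, in_l2 x -> A (fun k => c * x k) = (fun k => c * A x k)).

Definition bounded_by (A : (nat -> R[i]) -> (nat -> R[i])) (M : R) : Prop :=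
  0 <= M /\ forall x, in_l2 x -> (l2sq (A x) <= (M ^+ 2)%:E * l2sq x)%E.

Definition bounded_op (A : (nat -> R[i]) -> (nat -> R[i])) : Prop :=
  l2_linear A /\ exists M, bounded_by A M.

Definition mat_entry (A : (nat -> R[i]) -> (nat -> R[i])) (m n : nat) : R[i] :=
  A (basis_vec n) m.

End L2.

From HB Require Import structures.
From mathcomp Require Import all_boot all_order all_algebra.
From mathcomp Require Import all_classical all_reals all_analysis.
From mathcomp Require Import complex.
From mathcomp Require Import ring lra.
Set Implicit Arguments.
Unset Strict Implicit.
Unset Printing Implicit Defensive.
Import Order.TTheory GRing.Theory Num.Theory numFieldNormedType.Exports.
Local Open Scope classical_set_scope.
Local Open Scope ring_scope.

Local Notation cRe := complex.Re.
Local Notation cIm := complex.Im.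

(* Everything reduces to finite sections
     sum_(m < K) |sum_(n < N) a_mn y_n|^2 <= M^2 sum_(n < N) |y_n|^2.          (S)
   1. If ||A|| <= M, then a satisfies (S)  [finite_section_bound].
   2. If a satisfies (S), so does b  [conj_sections]. On the finitely many relevant
      indices, a layer-cake formula d_n^2 = sum_p w_p [n in p] (w_p >= 0, layers p
      upward closed for d) writes row m of b y as a convex combination, with weights
      w_p [m in p] / d_m^2, of the numbers d_m (a P_p D^-1 y)_m, P_p being the
      projection onto the layer p; this uses triangularity (P_p a P_p = a P_p).
      Jensen's inequality, (S) for a on each P_p D^-1 y, and
      sum_p w_p |P_p D^-1 y|^2 = |y|^2 conclude.
   3. A matrix satisfying (S) defines an operator on l2 by the (convergent) row
      series; it is linear, bounded by M, and has the given matrix  [matrix_op]. *)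

Section ComplexArithmetic.
Variable R : realType.
Implicit Types (r : R) (z : R[i]).

Lemma Re_sum (I : Type) (s : seq I) (F : I -> R[i]) :
  cRe (\sum_(i <- s) F i) = \sum_(i <- s) cRe (F i).
Proof. exact: raddf_sum. Qed.

Lemma Im_sum (I : Type) (s : seq I) (F : I -> R[i]) :
  cIm (\sum_(i <- s) F i) = \sum_(i <- s) cIm (F i).
Proof. exact: raddf_sum. Qed.

Lemma ReM z w : cRe (z * w) = cRe z * cRe w - cIm z * cIm w.
Proof. by case: z => ? ?; case: w. Qed.

Lemma ImM z w : cIm (z * w) = cRe z * cIm w + cIm z * cRe w.
Proof. by case: z => ? ?; case: w => ? ? /=; ring. Qed.

Lemma Re_realM r z : cRe (r%:C%C * z) = r * cRe z.
Proof. by case: z => x y /=; ring. Qed.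

Lemma Im_realM r z : cIm (r%:C%C * z) = r * cIm z.
Proof. by case: z => x y /=; ring. Qed.

Lemma csq_ge0 z : 0 <= csq z.
Proof. by rewrite /csq addr_ge0 // sqr_ge0. Qed.

Lemma csq_realM r z : csq (r%:C%C * z) = r ^+ 2 * csq z.
Proof. by rewrite /csq Re_realM Im_realM; ring. Qed.

Lemma sqr_Re_le_csq z : cRe z ^+ 2 <= csq z.
Proof. by rewrite /csq lerDl sqr_ge0. Qed.

Lemma sqr_Im_le_csq z : cIm z ^+ 2 <= csq z.
Proof. by rewrite /csq lerDr sqr_ge0. Qed.

(* Jensen's inequality for the square on the reals: for convex weights c,
   (sum_i c_i a_i)^2 <= sum_i c_i a_i^2 (the weighted variance is nonnegative). *)
Lemma sqr_convex (I : eqType) (s : seq I) (c a : I -> R) :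
  {in s, forall i, 0 <= c i} -> \sum_(i <- s) c i = 1 ->
  (\sum_(i <- s) c i * a i) ^+ 2 <= \sum_(i <- s) c i * a i ^+ 2.
Proof.
move=> c_ge0 c_sum1; set mu := \sum_(i <- s) c i * a i.
have var_ge0 : 0 <= \sum_(i <- s) c i * (a i - mu) ^+ 2.
  by rewrite big_seq; apply: sumr_ge0 => i /c_ge0 ci; rewrite mulr_ge0 // sqr_ge0.
have var_eq : \sum_(i <- s) c i * (a i - mu) ^+ 2 =
    \sum_(i <- s) c i * a i ^+ 2 - (2 * mu) * mu + mu ^+ 2 * \sum_(i <- s) c i.
  rewrite (eq_bigr (fun i => c i * a i ^+ 2 - (2 * mu) * (c i * a i) + mu ^+ 2 * c i));
    last by move=> i _; ring.
  by rewrite big_split /= sumrB -!mulr_sumr.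
by move: var_ge0; rewrite var_eq c_sum1; lra.
Qed.

Lemma csq_convex (I : eqType) (s : seq I) (c : I -> R) (w : I -> R[i]) :
  {in s, forall i, 0 <= c i} -> \sum_(i <- s) c i = 1 ->
  csq (\sum_(i <- s) (c i)%:C%C * w i) <= \sum_(i <- s) c i * csq (w i).
Proof.
move=> c_ge0 c_sum1; rewrite /csq Re_sum Im_sum.
under eq_bigr do rewrite Re_realM.
under [in X in _ + X <= _]eq_bigr do rewrite Im_realM.
rewrite [X in _ <= X](eq_bigr (fun i => c i * cRe (w i) ^+ 2 + c i * cIm (w i) ^+ 2));
  last by move=> i _; ring.
by rewrite big_split /= lerD // sqr_convex.
Qed.

End ComplexArithmetic.

Section LayerCake.
Variable R : realType.

Lemma path_le_last (x0 : R) (l : seq R) :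
  path <=%R x0 l -> forall a, a \in x0 :: l -> a <= last x0 l.
Proof.
elim: l x0 => [|y l IH] x0 /=; first by move=> _ a; rewrite inE => /eqP->.
move=> /andP[x0y yl] a; rewrite inE => /orP[/eqP->|al]; last exact: IH.
exact: le_trans x0y (IH _ yl _ (mem_head _ _)).
Qed.

Lemma layer_cake_sorted (l : seq R) : path <=%R 0 l ->
  exists ps : seq (R * R),
    [/\ forall p, p \in ps -> 0 <= p.2, \sum_(p <- ps) p.2 = last 0 l,
        forall p, p \in ps -> p.1 <= last 0 l &
        forall a, a \in l -> \sum_(p <- ps) p.2 * (p.1 <= a)%R%:R = a].
Proof.
elim/last_ind: l => [|l x IH].
  by move=> _; exists [::]; split => //; rewrite big_nil.
rewrite rcons_path => /andP[l_path Lx]; have [ps [w_ge0 w_sum c_le rep]] := IH l_path.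
set L := last 0 l in Lx w_sum c_le.
exists (rcons ps (x, x - L)); rewrite last_rcons; split.
- by move=> p; rewrite mem_rcons inE => /orP[/eqP->|/w_ge0//]; rewrite /= subr_ge0.
- by rewrite -cats1 big_cat big_seq1 /= w_sum; ring.
- by move=> p; rewrite mem_rcons inE => /orP[/eqP->//|/c_le cL]; exact: le_trans cL Lx.
move=> a; rewrite mem_rcons inE -cats1 big_cat big_seq1 /= => /orP[/eqP->|al].
  rewrite lexx mulr1 (eq_big_seq (fun p : R * R => p.2)) ?w_sum; first by ring.
  by move=> p /c_le cL; rewrite (le_trans cL Lx) mulr1.
rewrite rep //; have aL : a <= L by apply: path_le_last l_path _ _; rewrite inE al orbT.
have [xa|] := leP x a; last by rewrite mulr0 addr0.
have -> : x = L by apply/eqP; rewrite eq_le Lx (le_trans xa aL).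
by rewrite subrr mul0r addr0.
Qed.

Lemma layer_cake (s : seq R) : {in s, forall a, 0 <= a} ->
  exists ps : seq (R * R), (forall p, p \in ps -> 0 <= p.2) /\
    forall a, a \in s -> \sum_(p <- ps) p.2 * (p.1 <= a)%R%:R = a.
Proof.
move=> s_ge0.
have sorted_path : path <=%R 0 (sort <=%R s).
  rewrite path_sortedE; last exact: le_trans.
  rewrite sort_sorted ?andbT; last exact: le_total.
  by apply/allP => a; rewrite mem_sort => /s_ge0.
have [ps [w_ge0 _ _ rep]] := @layer_cake_sorted _ sorted_path.
by exists ps; split => // a a_in; rewrite rep // mem_sort.
Qed.

End LayerCake.

Section DiagonalConjugation.
Variables (R : realType) (a : nat -> nat -> R[i]) (d : nat -> R) (M : R).
Hypothesis d_gt0 : forall n, 0 < d n.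
Hypothesis a_tri : forall m n, d m < d n -> a m n = 0.
Hypothesis a_sections : forall (y : nat -> R[i]) K N,
  \sum_(0 <= m < K) csq (\sum_(0 <= n < N) a m n * y n)
    <= M ^+ 2 * \sum_(0 <= n < N) csq (y n).

Let d_neq0 n : d n != 0. Proof. by rewrite gt_eqF. Qed.

Definition conj_entry m n : R[i] := ((d m)^-1)%:C%C * a m n * (d n)%:C%C.

Section Layers.
Variables (L : nat) (ps : seq (R * R)).
Hypothesis weight_ge0 : forall p, p \in ps -> 0 <= p.2.

Definition level (p : R * R) k : R := (p.1 <= d k ^+ 2)%R%:R.

Hypothesis level_sum : forall k, (k < L)%N -> \sum_(p <- ps) p.2 * level p k = d k ^+ 2.

Lemma level_idem p k : level p k * level p k = level p k.
Proof. by rewrite /level; case: (p.1 <= _)%R; rewrite ?mulr0 ?mulr1. Qed.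

Lemma level_ge0 p k : 0 <= level p k.
Proof. by rewrite /level; case: (p.1 <= _)%R. Qed.

Lemma level_le1 p k : level p k <= 1.
Proof. by rewrite /level; case: (p.1 <= _)%R. Qed.

Lemma level_mono p m n : d n <= d m -> level p m * level p n = level p n.
Proof.
move=> dnm; rewrite /level; have [cn|] := leP p.1 (d n ^+ 2); last by rewrite mulr0.
by rewrite (le_trans cn) ?mulr1 // lerXn2r // ?nnegrE ltW.
Qed.

Variable x : nat -> R[i].

(* Row m of a applied to the vector P_p D^-1 x truncated to its first N entries,
   where P_p is the coordinate projection onto the layer p. *)
Definition layer_row p m N : R[i] :=
  \sum_(0 <= n < N) a m n * ((level p n / d n)%:C%C * x n).

(* Triangularity gives P_p a P_p = a P_p, i.e. [m in p] a_mn [n in p] = a_mn [n in p];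
   with d_n^2 = sum_p w_p [n in p] this makes row m of D^-1 a D x the combination
   of the rows m of a P_p D^-1 x with coefficients w_p [m in p] / d_m. *)
Lemma conj_row_layers m N : (N <= L)%N ->
  \sum_(0 <= n < N) conj_entry m n * x n =
  \sum_(p <- ps) (p.2 * level p m / d m)%:C%C * layer_row p m N.
Proof.
move=> NL; rewrite /layer_row.
under [RHS]eq_bigr do rewrite mulr_sumr.
rewrite exchange_big /= big_nat [RHS]big_nat; apply: eq_bigr => n /andP[_ nN].
transitivity ((\sum_(p <- ps) p.2 * level p m / d m * (level p n / d n))%:C%C *
              a m n * x n); last first.
  rewrite rmorph_sum big_distrl big_distrl /=.
  by apply: eq_bigr => p _; rewrite !rmorphM; ring.
have [dmn|dnm] := ltP (d m) (d n); first by rewrite /conj_entry a_tri // !mulr0 !mul0r.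
rewrite (eq_bigr (fun p : R * R => p.2 * level p n / (d m * d n))); last first.
  move=> p _; rewrite -[in RHS](level_mono p dnm).
  by field; rewrite ?d_neq0.
rewrite -mulr_suml level_sum; last exact: leq_trans nN NL.
have -> : d n ^+ 2 / (d m * d n) = (d m)^-1 * d n by field; rewrite ?d_neq0.
by rewrite /conj_entry rmorphM; ring.
Qed.

(* Jensen's inequality for the convex weights w_p [m in p] / d_m^2. *)
Lemma conj_row_jensen m N : (m < L)%N ->
  csq (\sum_(p <- ps) (p.2 * level p m / d m)%:C%C * layer_row p m N)
    <= \sum_(p <- ps) p.2 * csq (layer_row p m N).
Proof.
move=> mL.
rewrite (eq_bigr (fun p : R * R =>
    (p.2 * level p m / d m ^+ 2)%:C%C * ((d m)%:C%C * layer_row p m N))); last first.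
  by move=> p _; rewrite mulrA -rmorphM; congr (_%:C%C * _); field; rewrite ?d_neq0.
apply: le_trans (@csq_convex _ _ ps (fun p => p.2 * level p m / d m ^+ 2) _ _ _) _.
- by move=> p /weight_ge0 wp; rewrite divr_ge0 ?sqr_ge0 // mulr_ge0 // level_ge0.
- by rewrite -mulr_suml level_sum // mulfV // expf_neq0.
rewrite big_seq [X in _ <= X]big_seq; apply: ler_sum => p /weight_ge0 wp.
have -> : p.2 * level p m / d m ^+ 2 * csq ((d m)%:C%C * layer_row p m N) =
    p.2 * (level p m * csq (layer_row p m N)).
  by rewrite csq_realM; field; rewrite ?d_neq0.
by rewrite ler_wpM2l // ler_piMl ?csq_ge0 ?level_le1.
Qed.

Lemma layer_norm n : (n < L)%N ->
  \sum_(p <- ps) p.2 * csq ((level p n / d n)%:C%C * x n) = csq (x n).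
Proof.
move=> nL; under eq_bigr do rewrite csq_realM.
rewrite (eq_bigr (fun p : R * R => csq (x n) / d n ^+ 2 * (p.2 * level p n))); last first.
  by move=> p _; rewrite -[in RHS]level_idem; field; rewrite ?d_neq0.
by rewrite -mulr_sumr level_sum // mulfVK // expf_neq0.
Qed.

Lemma conj_sections_layers K N : (K <= L)%N -> (N <= L)%N ->
  \sum_(0 <= m < K) csq (\sum_(0 <= n < N) conj_entry m n * x n)
    <= M ^+ 2 * \sum_(0 <= n < N) csq (x n).
Proof.
move=> KL NL.
have rows : \sum_(0 <= m < K) csq (\sum_(0 <= n < N) conj_entry m n * x n)
    <= \sum_(p <- ps) p.2 * \sum_(0 <= m < K) csq (layer_row p m N).
  under [X in _ <= X]eq_bigr do rewrite mulr_sumr.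
  rewrite exchange_big /=; apply: ler_sum_nat => m /andP[_ mK].
  by rewrite conj_row_layers ?conj_row_jensen // (leq_trans mK).
have sections : \sum_(p <- ps) p.2 * \sum_(0 <= m < K) csq (layer_row p m N)
    <= \sum_(p <- ps) p.2 *
         (M ^+ 2 * \sum_(0 <= n < N) csq ((level p n / d n)%:C%C * x n)).
  rewrite big_seq [X in _ <= X]big_seq; apply: ler_sum => p /weight_ge0 wp.
  by apply: (ler_wpM2l wp); exact: a_sections.
have reassemble : \sum_(p <- ps) p.2 *
      (M ^+ 2 * \sum_(0 <= n < N) csq ((level p n / d n)%:C%C * x n))
    = M ^+ 2 * \sum_(0 <= n < N) csq (x n).
  under eq_bigr do rewrite mulrCA mulr_sumr.
  rewrite -mulr_sumr exchange_big /=; congr (_ * _).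
  by apply: eq_big_nat => n /andP[_ nN]; rewrite layer_norm // (leq_trans nN).
by rewrite -reassemble (le_trans rows sections).
Qed.

End Layers.

Lemma conj_sections (x : nat -> R[i]) K N :
  \sum_(0 <= m < K) csq (\sum_(0 <= n < N) conj_entry m n * x n)
    <= M ^+ 2 * \sum_(0 <= n < N) csq (x n).
Proof.
have [|ps [w_ge0 cake]] := @layer_cake _ [seq d k ^+ 2 | k <- iota 0 (K + N)].
  by move=> _ /mapP[k _ ->]; exact: sqr_ge0.
apply: (@conj_sections_layers (K + N) ps) => //; [|exact: leq_addr|exact: leq_addl].
by move=> k kL; apply: cake; apply/mapP; exists k; rewrite ?mem_iota.
Qed.

End DiagonalConjugation.

Section L2Vectors.
Variable R : realType.
Implicit Types (x y : nat -> R[i]).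

Lemma l2sq_finite x N : (forall k, (N <= k)%N -> x k = 0) ->
  l2sq x = (\sum_(0 <= k < N) csq (x k))%:E.
Proof.
move=> x_supp; rewrite /l2sq (@nneseries_split _ _ 0 N); last first.
  by move=> k _; rewrite lee_fin csq_ge0.
rewrite add0n (eseries0 (N := N)) ?adde0 ?sumEFin // => k Nk _.
by rewrite x_supp // /csq /= expr0n /= addr0.
Qed.

Lemma l2_finite x N : (forall k, (N <= k)%N -> x k = 0) -> in_l2 x.
Proof. by move=> x_supp; rewrite /in_l2 (@l2sq_finite x N x_supp) ltry. Qed.

Lemma l2sq_partial_le x N : ((\sum_(0 <= k < N) csq (x k))%:E <= l2sq x)%E.
Proof.
rewrite -sumEFin.
by apply: (nneseries_lim_ge (P := xpredT)) => k _ _; rewrite lee_fin csq_ge0.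
Qed.

Lemma l2_cvg x : in_l2 x -> cvgn (series (fun k => csq (x k))).
Proof. by move=> x_l2; apply: nnseries_is_cvg => // k; exact: csq_ge0. Qed.

Lemma l2sqE x : in_l2 x -> l2sq x = (limn (series (fun k => csq (x k))))%:E.
Proof.
move=> x_l2; rewrite -(EFin_lim (l2_cvg x_l2)) /l2sq.
by apply: congr_lim; apply: funext => N /=; rewrite sumEFin.
Qed.

Lemma sum_basis_vec y N j :
  \sum_(0 <= k < N) y k * basis_vec R j k = if (j < N)%N then y j else 0.
Proof.
elim: N => [|N IH]; first by rewrite big_nil.
rewrite big_nat_recr //= IH /basis_vec ltnS.
by case: (ltngtP j N) => h /=; rewrite ?mulr0 ?addr0 ?mulr1 ?add0r // h.
Qed.

Definition basis_comb y N : nat -> R[i] :=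
  fun k => \sum_(0 <= n < N) y n * basis_vec R n k.

Lemma basis_combE y N k : basis_comb y N k = if (k < N)%N then y k else 0.
Proof.
rewrite /basis_comb (eq_bigr (fun n => y n * basis_vec R k n)) ?sum_basis_vec //.
by move=> n _; rewrite /basis_vec eq_sym.
Qed.

Lemma basis_comb_l2 y N : in_l2 (basis_comb y N).
Proof. by apply: (@l2_finite _ N) => k Nk; rewrite basis_combE ltnNge Nk. Qed.

Section LinearOperator.
Variable A : (nat -> R[i]) -> (nat -> R[i]).
Hypothesis A_lin : l2_linear A.

Lemma linear_basis_comb y N :
  A (basis_comb y N) = fun m => \sum_(0 <= n < N) mat_entry A m n * y n.
Proof.
have [_ [A_add A_scale]] := A_lin.
have e_l2 n : in_l2 (basis_vec R n).
  by apply: (@l2_finite _ n.+1) => k Nk; rewrite /basis_vec gtn_eqF.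
elim: N => [|N IH].
  have -> : basis_comb y 0 = fun k => 0 * basis_comb y 0 k.
    by rewrite /basis_comb; apply: funext => k; rewrite mul0r big_nil.
  rewrite A_scale; last exact: basis_comb_l2.
  by apply: funext => k; rewrite mul0r big_nil.
have -> : basis_comb y N.+1 = fun k => basis_comb y N k + y N * basis_vec R N k.
  by rewrite /basis_comb; apply: funext => k; rewrite big_nat_recr.
have scaled_e_l2 : in_l2 (fun k => y N * basis_vec R N k).
  by apply: (@l2_finite _ N.+1) => k Nk; rewrite /basis_vec gtn_eqF ?mulr0.
rewrite A_add //; last exact: basis_comb_l2.
rewrite A_scale // IH; apply: funext => m.
by rewrite big_nat_recr //= mulrC.
Qed.

Lemma finite_section_bound M : bounded_by A M ->
  forall y K N, \sum_(0 <= m < K) csq (\sum_(0 <= n < N) mat_entry A m n * y n)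
    <= M ^+ 2 * \sum_(0 <= n < N) csq (y n).
Proof.
move=> [_ A_M] y K N.
have := le_trans (l2sq_partial_le _ K) (A_M _ (basis_comb_l2 y N)).
rewrite linear_basis_comb (@l2sq_finite _ N); last first.
  by move=> k Nk; rewrite basis_combE ltnNge Nk.
rewrite -EFinM lee_fin; congr (_ <= _ * _).
by apply: eq_big_nat => k /andP[_ kN]; rewrite basis_combE kN.
Qed.

End LinearOperator.
End L2Vectors.

Section ComplexLimits.
Variable R : realType.
Implicit Types (u v : nat -> R[i]) (z : R[i]).

Definition ccvg u : Prop := cvgn (fun N => cRe (u N)) /\ cvgn (fun N => cIm (u N)).

Definition clim u : R[i] := (limn (fun N => cRe (u N)) +i* limn (fun N => cIm (u N)))%C.

Lemma clim_eq u z : (fun N => cRe (u N)) @ \oo --> cRe z ->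
  (fun N => cIm (u N)) @ \oo --> cIm z -> clim u = z.
Proof.
move=> uRe uIm; rewrite /clim (cvg_lim _ uRe) // (cvg_lim _ uIm) //.
by case: z uRe uIm.
Qed.

Lemma climD u v : ccvg u -> ccvg v -> clim (fun N => u N + v N) = clim u + clim v.
Proof.
move=> [uRe uIm] [vRe vIm]; apply: clim_eq => /=.
- by under eq_fun do rewrite raddfD; exact: cvgD.
- by under eq_fun do rewrite raddfD; exact: cvgD.
Qed.

Lemma climZ c u : ccvg u -> clim (fun N => c * u N) = c * clim u.
Proof.
move=> [uRe uIm]; apply: clim_eq.
- by under eq_fun do rewrite ReM; rewrite ReM; apply: cvgB; apply: cvgMl_tmp.
- by under eq_fun do rewrite ImM; rewrite ImM; apply: cvgD; apply: cvgMl_tmp.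
Qed.

Lemma csq_clim u : ccvg u -> (fun N => csq (u N)) @ \oo --> csq (clim u).
Proof.
move=> [uRe uIm]; rewrite /csq /=; apply: cvgD;
  by rewrite expr2; under eq_fun do rewrite expr2; exact: cvgM.
Qed.

End ComplexLimits.

Lemma cvg_series_dominated (R : realType) (u c : nat -> R) (M : R) :
  (forall n, 0 <= c n) -> cvgn (series c) ->
  (forall N1 N2, (\sum_(N1 <= n < N2) u n) ^+ 2 <= M ^+ 2 * \sum_(N1 <= n < N2) c n) ->
  cvgn (series u).
Proof.
move=> c_ge0 c_cvg u_dom; apply/cauchy_cvgP/cauchy_seriesP => e e_gt0.
pose e' := e ^+ 2 / (M ^+ 2 + 1).
have M1_gt0 : 0 < M ^+ 2 + 1 by apply: ltr_wpDl (sqr_ge0 M) ltr01.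
have e'_gt0 : 0 < e' by apply: divr_gt0 => //; exact: exprn_gt0.
have c_filter : Filter (series c @ \oo) by apply: fmap_filter.
have /(_ c_filter) := (cauchy_seriesP _).1 (cvg_cauchy _ c_cvg) e' e'_gt0.
apply: filterS => -[N1 N2] /=; set s := \sum_(N1 <= k < N2) c k => s_lt.
have s_ge0 : 0 <= s by apply: sumr_ge0.
rewrite ger0_norm // in s_lt.
have e2 : e ^+ 2 = M ^+ 2 * e' + e' by rewrite /e'; field; rewrite gt_eqF.
have Ms : M ^+ 2 * s <= M ^+ 2 * e' by rewrite ler_wpM2l ?sqr_ge0 ?ltW.
have := u_dom N1 N2; rewrite -/s; set t := \sum_(N1 <= k < N2) u k => t2.
have : `|t| ^+ 2 < e ^+ 2 by rewrite real_normK ?num_real // e2; lra.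
by have := normr_ge0 t; nra.
Qed.

Lemma sum_from_zero (V : zmodType) (f : nat -> V) N1 N2 : (N1 <= N2)%N ->
  (forall n, (n < N1)%N -> f n = 0) -> \sum_(0 <= n < N2) f n = \sum_(N1 <= n < N2) f n.
Proof.
by move=> N12 f0; rewrite (big_cat_nat (n := N1)) //= big_nat big1 ?add0r.
Qed.

Section MatrixOperator.
Variables (R : realType) (b : nat -> nat -> R[i]) (M : R).
Hypothesis b_sections : forall (x : nat -> R[i]) K N,
  \sum_(0 <= m < K) csq (\sum_(0 <= n < N) b m n * x n)
    <= M ^+ 2 * \sum_(0 <= n < N) csq (x n).
Implicit Types (x y : nat -> R[i]).

Definition row_partial x m N : R[i] := \sum_(0 <= n < N) b m n * x n.

Definition matrix_op x : nat -> R[i] := fun m => clim (row_partial x m).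

(* Any block of a single row is bounded, by zeroing the coordinates before N1. *)
Lemma row_block_bound x m N1 N2 :
  csq (\sum_(N1 <= n < N2) b m n * x n) <= M ^+ 2 * \sum_(N1 <= n < N2) csq (x n).
Proof.
have [N12|N21] := leqP N1 N2; last first.
  by rewrite !big_geq ?(ltnW N21) // /csq /= expr0n /= addr0 mulr0.
pose x' n := if (N1 <= n)%N then x n else 0.
have norm_x' : \sum_(0 <= n < N2) csq (x' n) = \sum_(N1 <= n < N2) csq (x n).
  rewrite (sum_from_zero N12) => [|n nN1]; last first.
    by rewrite /x' leqNgt nN1 /csq /= expr0n /= addr0.
  by apply: eq_big_nat => n /andP[N1n _]; rewrite /x' N1n.
have row_x' : \sum_(0 <= n < N2) b m n * x' n = \sum_(N1 <= n < N2) b m n * x n.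
  rewrite (sum_from_zero N12) => [|n nN1]; last by rewrite /x' leqNgt nN1 mulr0.
  by apply: eq_big_nat => n /andP[N1n _]; rewrite /x' N1n.
have := b_sections x' m.+1 N2; rewrite big_nat_recr //= norm_x' row_x'.
by apply: le_trans; rewrite lerDr; apply: sumr_ge0 => k _; exact: csq_ge0.
Qed.

Lemma row_ccvg x m : in_l2 x -> ccvg (row_partial x m).
Proof.
move=> x_l2.
have component_cvg f : (forall z, f z ^+ 2 <= csq z) ->
    (forall N1 N2, f (\sum_(N1 <= n < N2) b m n * x n) =
                   \sum_(N1 <= n < N2) f (b m n * x n)) ->
    cvgn (fun N => f (row_partial x m N)).
  move=> f_le f_sum; rewrite /row_partial.
  under eq_fun do rewrite f_sum.
  apply: (cvg_series_dominated (c := fun n => csq (x n)) (M := M) _ (l2_cvg x_l2)).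
    by move=> n; exact: csq_ge0.
  move=> N1 N2.
  by rewrite -f_sum; exact: le_trans (f_le _) (row_block_bound _ _ _ _).
split; apply: component_cvg.
- exact: sqr_Re_le_csq.
- by move=> N1 N2; rewrite Re_sum.
- exact: sqr_Im_le_csq.
- by move=> N1 N2; rewrite Im_sum.
Qed.

(* ||b x|| <= M ||x||: each head sum_(m < K) |(b x)_m|^2 is the limit in N of the
   finite sections, all bounded by M^2 ||x||^2. *)
Lemma matrix_op_bound x : in_l2 x -> (l2sq (matrix_op x) <= (M ^+ 2)%:E * l2sq x)%E.
Proof.
move=> x_l2; set T := limn (series (fun k => csq (x k))).
have partial_le N : \sum_(0 <= k < N) csq (x k) <= T.
  apply: (nondecreasing_cvgn_le _ (l2_cvg x_l2)).
  by apply: nondecreasing_series => n _ _; exact: csq_ge0.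
have head_le K : \sum_(0 <= m < K) csq (matrix_op x m) <= M ^+ 2 * T.
  have sections_cvg : (fun N => \sum_(0 <= m < K) csq (row_partial x m N)) @ \oo -->
      \sum_(0 <= m < K) csq (matrix_op x m).
    apply: cvg_big => [|m _]; first exact: add_continuous.
    exact: csq_clim (row_ccvg m x_l2).
  rewrite -(cvg_lim _ sections_cvg) //; apply: limr_le; first exact: cvgP sections_cvg.
  apply: nearW => N; apply: le_trans (b_sections x K N) _.
  by rewrite ler_wpM2l ?sqr_ge0.
rewrite (l2sqE x_l2) -EFinM /l2sq; apply: lime_le.
  by apply: is_cvg_nneseries => n _ _; rewrite lee_fin csq_ge0.
by apply: nearW => K; rewrite sumEFin lee_fin.
Qed.

(* Linearity comes from that of the limit; l2 membership from the bound. *)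
Lemma matrix_op_linear : l2_linear matrix_op.
Proof.
split; [|split].
- move=> x x_l2; rewrite /in_l2.
  apply: le_lt_trans (matrix_op_bound x_l2) _.
  by rewrite (l2sqE x_l2) -EFinM ltry.
- move=> x y x_l2 y_l2; apply: funext => m.
  rewrite /matrix_op -climD; try exact: row_ccvg.
  congr clim; apply: funext => N.
  by rewrite /row_partial -big_split; apply: eq_bigr => n _; rewrite mulrDr.
- move=> c x x_l2; apply: funext => m.
  rewrite /matrix_op -climZ; last exact: row_ccvg.
  congr clim; apply: funext => N.
  by rewrite /row_partial mulr_sumr; apply: eq_bigr => n _; rewrite mulrCA.
Qed.

(* The matrix of the operator is b: applied to e_n, the m-th row is eventually b_mn. *)
Lemma matrix_op_entry m n : mat_entry matrix_op m n = b m n.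
Proof.
have row_eventually : \forall N \near \oo, row_partial (basis_vec R n) m N = b m n.
  by exists n.+1 => // N /= nN; rewrite /row_partial sum_basis_vec nN.
by apply: clim_eq; apply: cvg_near_cst; apply: filterS row_eventually => N ->.
Qed.

End MatrixOperator.

Theorem mainTheorem11 (R : realType) (A : (nat -> R[i]) -> (nat -> R[i]))
    (d : nat -> R) :
  bounded_op A ->
  (forall n, 0 < d n) ->
  (forall m n, d m < d n -> mat_entry A m n = 0) ->
  exists B : (nat -> R[i]) -> (nat -> R[i]),
    bounded_op B /\
    (forall m n, mat_entry B m n = ((d m)^-1)%:C%C * mat_entry A m n * (d n)%:C%C) /\
    (forall M : R, bounded_by A M -> bounded_by B M).
Proof.
move=> [A_lin [M0 A_M0]] d_gt0 A_tri.
have conj_M M : bounded_by A M -> forall x K N,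
    \sum_(0 <= m < K) csq (\sum_(0 <= n < N) conj_entry (mat_entry A) d m n * x n)
      <= M ^+ 2 * \sum_(0 <= n < N) csq (x n).
  by move=> A_M; apply: conj_sections => //; exact: finite_section_bound A_M.
have B_bound M : bounded_by A M -> bounded_by (matrix_op (conj_entry (mat_entry A) d)) M.
  by move=> A_M; split; [case: A_M | exact: matrix_op_bound (conj_M M A_M)].
exists (matrix_op (conj_entry (mat_entry A) d)); split; [|split].
- split; [exact: matrix_op_linear (conj_M M0 A_M0) | by exists M0; exact: B_bound].
- by move=> m n; rewrite matrix_op_entry.
- exact: B_bound.
Qed.
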